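(* Let $n\ge K\ge 1$ and $L\ge 1$ be integers and $\rho\in(0,1]$. Let $\Pi_r,\Pi_c\in[0,1]^{n\times K}$ be matrices whose rows each have $\ell_1$-norm $1$, and suppose there are index sets $\mathcal{I}_r,\mathcal{I}_c\subseteq[n]$ of size $K$ with $\Pi_r(\mathcal{I}_r,:)=I_{K\times K}$ and $\Pi_c(\mathcal{I}_c,:)=I_{K\times K}$. Let $B_1,\dots,B_L\in[0,1]^{K\times K}$, set $\Omega_l=\rho\,\Pi_r B_l\Pi_c'$ for $l\in[L]$, and define $\tilde S_r=\sum_{l\in[L]}\Omega_l\Omega_l'$ and $\tilde S_c=\sum_{l\in[L]}\Omega_l'\Omega_l$. Suppose that $\mathrm{rank}(\sum_{l\in[L]}B_lB_l')=K$ and $\mathrm{rank}(\sum_{l\in[L]}B_l'B_l)=K$. Then: (i) if $U_r\in\mathbb{R}^{n\times K}$ is a matrix whose columns are eigenvectors of $\tilde S_r$ associated with its $K$ largest eigenvalues in absolute value, with $U_r'U_r=I_{K\times K}$, then $U_r=\Pi_r U_r(\mathcal{I}_r,:)$; (ii) if $U_c\in\mathbb{R}^{n\times K}$ is a matrix whose columns are eigenvectors of $\tilde S_c$ associated with its $K$ largest eigenvalues in absolute value, with $U_c'U_c=I_{K\times K}$, then $U_c=\Pi_c U_c(\mathcal{I}_c,:)$.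
   Context: For a matrix $M$ and index set $S$, $M(S,:)$ denotes the submatrix formed by the rows of $M$ indexed by $S$ (in the order of $S$); $M'$ is the transpose; $[q]=\{1,\dots,q\}$. This is the population setting of the multi-layer mixed membership stochastic co-block model, where $\Pi_r$ and $\Pi_c$ are the row (sending) and column (receiving) membership matrices and $\mathcal{I}_r,\mathcal{I}_c$ index pure nodes. *)

From HB Require Import structures.
From mathcomp Require Import all_boot all_order all_algebra.
Set Implicit Arguments. Unset Strict Implicit. Unset Printing Implicit Defensive.
Import Order.TTheory GRing.Theory Num.Theory.
Local Open Scope ring_scope.

Definition membership_mx (R : realFieldType) (n K : nat) (P : 'M[R]_(n, K)) :=
  (forall i j, 0 <= P i j <= 1) /\ (forall i, \sum_(j < K) P i j = 1).

Definition unit_entries (R : realFieldType) (m p : nat) (B : 'M[R]_(m, p)) :=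
  forall i j, 0 <= B i j <= 1.

(* U : n x K consists of eigenvectors of the (symmetric) matrix S associated
   with its K largest eigenvalues in absolute value: U is formed by K columns
   (selected by the injection g) of an orthonormal eigenbasis V of S
   (S V = V diag(d)), and every eigenvalue d j attached to a column of V not
   selected is at most, in absolute value, every selected eigenvalue. *)
Definition top_abs_eigvecs (R : realFieldType) (n K : nat)
    (S : 'M[R]_n) (U : 'M[R]_(n, K)) :=
  exists (V : 'M[R]_n) (d : 'rV[R]_n) (g : 'I_K -> 'I_n),
    [/\ V^T *m V = 1%:M, S *m V = V *m diag_mx d, injective g,
        U = colsub g V &
        forall (k : 'I_K) (j : 'I_n), j \notin codom g ->
          `|d 0 j| <= `|d 0 (g k)|].

From HB Require Import structures.
From mathcomp Require Import all_boot all_order all_algebra.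
Set Implicit Arguments. Unset Strict Implicit. Unset Printing Implicit Defensive.
Import Order.TTheory GRing.Theory Num.Theory.
Local Open Scope ring_scope.

(* Both Gram matrices have the form S = P G P' where P(I,:) = I_K and G is an
   invertible K x K matrix; for S_r, G = rho^2 sum_l B_l Pc' Pc B_l', which is
   invertible because Pc' has a right inverse and sum_l B_l B_l' is invertible
   (a vanishing quadratic form of a sum of Gram matrices kills every term).
   Then rank S >= rank (P(I,:) S P(I,:)') = K, so the K eigenvalues of S that
   are largest in absolute value are nonzero and U = S U D^-1 = P (G P' U D^-1).
   Reading off the rows I gives U(I,:) = G P' U D^-1, that is U = P U(I,:). *)

Lemma mxrank_sum_le (F : fieldType) (I : finType) (P : pred I) m n
    (A : I -> 'M[F]_(m, n)) :
  (\rank (\sum_(i | P i) A i)%R <= \sum_(i | P i) \rank (A i))%N.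
Proof.
elim/big_ind2: _ => [|B b C c leBb leCc|//]; first by rewrite mxrank0.
exact: leq_trans (mxrank_add B C) (leq_add leBb leCc).
Qed.

Lemma mxrank_diag_le (F : fieldType) n (d : 'rV[F]_n) :
  (\rank (diag_mx d) <= #|[pred j | d ord0 j != 0%R]|)%N.
Proof.
rewrite diag_mx_sum_delta (bigID [pred j | d 0 j != 0]) /=.
rewrite [X in (_ + X)%R]big1 ?addr0 => [|j /negPn/eqP->]; last first.
  by rewrite scale0r.
apply: leq_trans (mxrank_sum_le _ _) _.
rewrite -sum1_card leq_sum // => j _.
by rewrite (leq_trans (mxrank_scale _ _)) ?mxrank_delta.
Qed.

Section GramMatrices.

Variable R : realFieldType.

Lemma mulmx_sum_gram_eq0 (I : finType) p m (A : I -> 'M[R]_(p, m))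
    (x : 'rV[R]_p) :
  x *m (\sum_i A i *m (A i)^T) = 0 -> forall i, x *m A i = 0.
Proof.
move=> x0 i; pose y j := x *m A j.
have sqr_y j : (y j *m (y j)^T) 0 0 = \sum_k y j 0 k ^+ 2.
  by rewrite mxE; apply: eq_bigr => k _; rewrite expr2 !mxE.
have sum_sqr_y : \sum_j \sum_k y j 0 k ^+ 2 = 0.
  under eq_bigr => j _ do rewrite -sqr_y.
  rewrite -summxE.
  have -> : \sum_j y j *m (y j)^T = x *m (\sum_j A j *m (A j)^T) *m x^T.
    rewrite mulmx_sumr mulmx_suml; apply: eq_bigr => j _.
    by rewrite trmx_mul !mulmxA.
  by rewrite x0 mul0mx mxE.
have yi0 : \sum_k y i 0 k ^+ 2 = 0.
  apply: (psumr_eq0P _ sum_sqr_y) => // j _.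
  by apply: sumr_ge0 => k _; exact: sqr_ge0.
rewrite -/(y i); apply/matrixP => r k; rewrite (ord1 r) [RHS]mxE.
apply/eqP; rewrite -sqrf_eq0.
by apply/eqP/(psumr_eq0P _ yi0) => // k' _; exact: sqr_ge0.
Qed.

Lemma row_free_sum_gram (I : finType) p m q (C : I -> 'M[R]_(p, m))
    (N : 'M[R]_(m, q)) :
  row_free N -> row_free (\sum_i C i *m (C i)^T) ->
  row_free (\sum_i (C i *m N) *m (C i *m N)^T).
Proof.
move=> Nfree Cfree; apply: inj_row_free => x /mulmx_sum_gram_eq0 xCN0.
have xC0 i : x *m C i = 0.
  by apply: (row_free_inj Nfree); rewrite /= mul0mx -mulmxA xCN0.
apply: (row_free_inj Cfree); rewrite mul0mx mulmx_sumr big1 // => i _.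
by rewrite mulmxA xC0 mul0mx.
Qed.

Lemma sum_gram_mulmxl (I : finType) m n p (P : 'M[R]_(m, n))
    (A : I -> 'M[R]_(n, p)) :
  \sum_i (P *m A i) *m (P *m A i)^T = P *m (\sum_i A i *m (A i)^T) *m P^T.
Proof.
rewrite mulmx_sumr mulmx_suml; apply: eq_bigr => i _.
by rewrite trmx_mul !mulmxA.
Qed.

Lemma top_abs_eigval_neq0 n K (S V : 'M[R]_n) (d : 'rV[R]_n)
    (g : 'I_K -> 'I_n) :
  V^T *m V = 1%:M -> S *m V = V *m diag_mx d ->
  (forall k j, j \notin codom g -> `|d 0 j| <= `|d 0 (g k)|) ->
  (K <= \rank S)%N -> forall k, d 0 (g k) != 0.
Proof.
move=> VV SV dmax rankS k0; apply/negP => /eqP dk0.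
have supp_d : [pred j | d 0 j != 0] \subset g @: [set~ k0].
  apply/subsetP => j; rewrite inE => dj.
  have [/codomP [k ejk]|jg] := boolP (j \in codom g).
    rewrite ejk imset_f // !inE; apply: contraNneq dj => ekk.
    by rewrite ejk ekk dk0.
  have := dmax k0 j jg; rewrite dk0 normr0 normr_le0 => /eqP dj0.
  by rewrite dj0 eqxx in dj.
have rankS_diag : (\rank S <= \rank (diag_mx d))%N.
  have -> : S = V *m diag_mx d *m V^T.
    by rewrite -SV -mulmxA (mulmx1C VV) mulmx1.
  exact: leq_trans (mxrankM_maxl _ _) (mxrankM_maxr _ _).
have card_supp : (#|[pred j | d ord0 j != 0%R]| <= K.-1)%N.
  rewrite -(card_ord K) -(cardsC1 k0).
  exact: leq_trans (subset_leq_card supp_d) (leq_imset_card _ _).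
have := leq_trans rankS_diag (leq_trans (mxrank_diag_le d) card_supp).
move/(leq_trans rankS).
by rewrite leqNgt ltn_predL (leq_ltn_trans (leq0n k0) (ltn_ord k0)).
Qed.

Lemma top_abs_eigvecs_range n K (S : 'M[R]_n) (U : 'M[R]_(n, K)) :
  (K <= \rank S)%N -> top_abs_eigvecs S U -> exists W, U = S *m W.
Proof.
move=> rankS [V [d [g [VV SV _ -> dmax]]]].
have dg_neq0 := top_abs_eigval_neq0 VV SV dmax rankS.
exists (colsub g V *m diag_mx (\row_k (d 0 (g k))^-1)).
rewrite mulmxA mulmx_colsub SV; apply/matrixP => i k.
by rewrite mul_mx_diag (mul_mx_diag V) !mxE -mulrA mulfV ?mulr1.
Qed.

Lemma sandwich_top_abs_eigvecs n K (P : 'M[R]_(n, K)) (G : 'M[R]_K)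
    (I : 'I_K -> 'I_n) (U : 'M[R]_(n, K)) :
  rowsub I P = 1%:M -> row_free G ->
  top_abs_eigvecs (P *m G *m P^T) U -> U = P *m rowsub I U.
Proof.
move=> IP Gfree /top_abs_eigvecs_range [|W ->].
  pose E : 'M[R]_(K, n) := rowsub I 1%:M.
  have EP : E *m P = 1%:M by rewrite mul_rowsub_mx mul1mx.
  have EStE : E *m (P *m G *m P^T) *m E^T = G.
    by rewrite !mulmxA EP mul1mx -mulmxA -trmx_mul EP trmx1 mulmx1.
  rewrite -[X in (X <= _)%N](eqP Gfree) -[X in (\rank X <= _)%N]EStE.
  exact: leq_trans (mxrankM_maxl _ _) (mxrankM_maxr _ _).
by rewrite -!mulmxA -mul_rowsub_mx IP mul1mx.
Qed.

Lemma scaled_gram_top_abs_eigvecs n K L (rho : R) (P Q : 'M[R]_(n, K))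
    (I J : 'I_K -> 'I_n) (C : 'I_L -> 'M[R]_K) (U : 'M[R]_(n, K)) :
  rho != 0 -> rowsub I P = 1%:M -> rowsub J Q = 1%:M ->
  row_free (\sum_l C l *m (C l)^T) ->
  top_abs_eigvecs (\sum_l (rho *: (P *m C l *m Q^T)) *m
                          (rho *: (P *m C l *m Q^T))^T) U ->
  U = P *m rowsub I U.
Proof.
move=> rho0 IP JQ Cfree.
have QTfree : row_free (rho *: Q^T).
  apply/row_freeP; exists (rho^-1 *: (rowsub J 1%:M)^T).
  rewrite -scalemxAr -scalemxAl scalerA mulVf // scale1r -trmx_mul.
  by rewrite mul_rowsub_mx mul1mx JQ trmx1.
under eq_bigr => l _ do rewrite scalemxAr -[_ *m (rho *: Q^T)]mulmxA.
rewrite sum_gram_mulmxl => /sandwich_top_abs_eigvecs; apply=> //.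
exact: row_free_sum_gram.
Qed.

End GramMatrices.

Theorem lemma1 (R : realFieldType) (n K L : nat) (rho : R)
    (Pr Pc : 'M[R]_(n, K)) (Ir Ic : 'I_K -> 'I_n) (B : 'I_L -> 'M[R]_K) :
  (1 <= K)%N -> (K <= n)%N -> (1 <= L)%N ->
  0 < rho -> rho <= 1 ->
  membership_mx Pr -> membership_mx Pc ->
  injective Ir -> injective Ic ->
  rowsub Ir Pr = 1%:M -> rowsub Ic Pc = 1%:M ->
  (forall l, unit_entries (B l)) ->
  \rank (\sum_(l < L) B l *m (B l)^T)%R = K ->
  \rank (\sum_(l < L) (B l)^T *m B l)%R = K ->
  let Omega := fun l : 'I_L => rho *: (Pr *m B l *m Pc^T) in
  let Sr := \sum_(l < L) Omega l *m (Omega l)^T in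
  let Sc := \sum_(l < L) (Omega l)^T *m Omega l in
  (forall Ur : 'M[R]_(n, K),
     top_abs_eigvecs Sr Ur -> Ur^T *m Ur = 1%:M -> Ur = Pr *m rowsub Ir Ur) /\
  (forall Uc : 'M[R]_(n, K),
     top_abs_eigvecs Sc Uc -> Uc^T *m Uc = 1%:M -> Uc = Pc *m rowsub Ic Uc).
Proof.
move=> _ _ _ rho_gt0 _ _ _ _ _ IrPr IcPc _ rankB rankBt Omega Sr Sc.
have rho0 : rho != 0 by rewrite gt_eqF.
split=> U + _.
  by apply: scaled_gram_top_abs_eigvecs rho0 IrPr IcPc _; apply/eqP.
have OmegaT l : (Omega l)^T = rho *: (Pc *m (B l)^T *m Pr^T).
  by rewrite linearZ /= !trmx_mul trmxK mulmxA.
have -> : Sc = \sum_l (Omega l)^T *m ((Omega l)^T)^T.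
  by apply: eq_bigr => l _; rewrite trmxK.
under eq_bigr => l _ do rewrite OmegaT.
apply: scaled_gram_top_abs_eigvecs rho0 IcPc IrPr _.
by under eq_bigr => l _ do rewrite trmxK; apply/eqP.
Qed.
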